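(* Under the LP mechanism (in either its fractional or its randomized interpretation), truthfully reporting the execution times is a weakly dominant strategy for every machine: for every true cost matrix $\mathbf t$, every machine $i$ and every declaration matrix $\hat{\mathbf t}$, $C_i(\mathbf t_i,\hat{\mathbf t}_{-i})\le C_i(\hat{\mathbf t})$.
   Context: Scheduling without payments: $n$ machines, $m$ tasks; machine $i$ has private true times $t_{i,j}\ge0$ and declares $\hat t_{i,j}\ge0$; $\mathbf t_i$ denotes row $i$ and $(\mathbf x_i,\hat{\mathbf t}_{-i})$ the matrix where row $i$ of $\hat{\mathbf t}$ is replaced by $\mathbf x_i$. Machines are bound by their declarations: a machine assigned (a fraction of, or with some probability) task $j$ executes it for time $\max\{\hat t_{i,j},t_{i,j}\}$ (times the fraction). Given a mechanism outputting $\alpha_{i,j}(\hat{\mathbf t})\in[0,1]$ with $\sum_i\alpha_{i,j}=1$ for each $j$ (interpreted either as the fraction of task $j$ given to machine $i$, or as the probability that machine $i$ gets task $j$), the cost of machine $i$ is $C_i(\hat{\mathbf t})=\sum_j\alpha_{i,j}(\hat{\mathbf t})\max\{\hat t_{i,j},t_{i,j}\}$. The LP mechanism, on declarations $\hat{\mathbf t}$, outputs an optimal solution $\alpha(\hat{\mathbf t})$ (selected by some fixed rule among optimal solutions, e.g.\ lexicographically smallest) of the linear program: minimize $\mu$ subject to $\sum_i\alpha_{i,j}=1$ for all $j$, $\mu-\sum_j\alpha_{i,j}\hat t_{i,j}\ge0$ for all $i$, and $\alpha_{i,j}\ge0$ for all $i,j$. The LP fractional mechanism interprets $\alpha$ as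 fractions; the LP randomized mechanism interprets $\alpha$ as allocation probabilities. *)

From mathcomp Require Import all_boot all_order all_algebra.
Set Implicit Arguments. Unset Strict Implicit. Unset Printing Implicit Defensive.
Import Order.TTheory GRing.Theory Num.Theory.
Local Open Scope ring_scope.

(* Matrices 'M[R]_(n, m): rows = machines, columns = tasks. *)

Definition nonneg_mx (R : realFieldType) (n m : nat) (d : 'M[R]_(n, m)) : Prop :=
  forall i j, 0 <= d i j.

Definition lp_feasible (R : realFieldType) (n m : nat) (d : 'M[R]_(n, m))
    (sol : 'M[R]_(n, m) * R) : Prop :=
  [/\ forall j, \sum_(i < n) sol.1 i j = 1,
      forall i, 0 <= sol.2 - \sum_(j < m) sol.1 i j * d i j
    & forall i j, 0 <= sol.1 i j].

Definition lp_optimal (R : realFieldType) (n m : nat) (d : 'M[R]_(n, m))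
    (sol : 'M[R]_(n, m) * R) : Prop :=
  lp_feasible d sol /\ forall sol', lp_feasible d sol' -> sol.2 <= sol'.2.

Definition LP_mechanism (R : realFieldType) (n m : nat)
    (mech : 'M[R]_(n, m) -> 'M[R]_(n, m) * R) : Prop :=
  forall d, nonneg_mx d -> lp_optimal d (mech d).

(* (x_i, d_{-i}) : row i of d replaced by row i of x *)
Definition replace_row (R : realFieldType) (n m : nat) (i : 'I_n)
    (x d : 'M[R]_(n, m)) : 'M[R]_(n, m) :=
  \matrix_(k, j) (if k == i then x i j else d k j).

(* Cost of machine i with true times t under declarations d:
   C_i(d) = sum_j alpha_ij(d) * max(d_ij, t_ij)  (fraction, or expected cost). *)
Definition cost (R : realFieldType) (n m : nat)
    (mech : 'M[R]_(n, m) -> 'M[R]_(n, m) * R) (t : 'M[R]_(n, m)) (i : 'I_n)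
    (d : 'M[R]_(n, m)) : R :=
  \sum_(j < m) (mech d).1 i j * Num.max (d i j) (t i j).

(* In every optimal solution of the LP each machine's declared load equals
   the makespan mu: if some machine were strictly below mu, moving a small
   fraction of every task to it would lower the makespan.  Hence, at
   the truthful profile, the allocation chosen for the lie t^ is still
   feasible with makespan at most max(mu(t^), true load of machine i), and
   both quantities are bounded by the cost C_i(t^); the truthful cost is
   itself bounded by the truthful makespan. *)
From mathcomp Require Import all_boot all_order all_algebra.
From mathcomp Require Import ring lra.
Set Implicit Arguments. Unset Strict Implicit. Unset Printing Implicit Defensive.
Import Order.TTheory GRing.Theory Num.Theory.
Local Open Scope ring_scope.

Section LPLoads.

Variables (R : realFieldType) (n m : nat).
Implicit Types (a d : 'M[R]_(n, m)) (i : 'I_n).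

Definition load a d i : R := \sum_(j < m) a i j * d i j.

Lemma lp_feasible_load_le d sol i : lp_feasible d sol -> load sol.1 d i <= sol.2.
Proof. by case=> _ Hl _; rewrite -subr_ge0; apply: Hl. Qed.

Lemma load_ge0 a d i :
  nonneg_mx d -> (forall k j, 0 <= a k j) -> 0 <= load a d i.
Proof. by move=> d0 a0; apply: sumr_ge0 => j _; apply: mulr_ge0. Qed.

Definition shift_to i (e : R) a : 'M[R]_(n, m) :=
  \matrix_(k, j) ((1 - e) * a k j + (k == i)%:R * e).

Lemma load_shift_to a d i k e :
  load (shift_to i e a) d k
    = (1 - e) * load a d k + (k == i)%:R * e * \sum_(j < m) d k j.
Proof.
rewrite /load mulr_sumr mulr_sumr -big_split /=.
by apply: eq_bigr => j _; rewrite mxE; ring.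
Qed.

Lemma lp_feasible_shift_to d a mu i e :
  0 <= e <= 1 -> lp_feasible d (a, mu) ->
  lp_feasible d (shift_to i e a,
                 Num.max ((1 - e) * mu) ((1 - e) * load a d i + e * \sum_(j < m) d i j)).
Proof.
move=> /andP[e0 e1] F; have [Hs _ _] := F.
have e1' : 0 <= 1 - e by rewrite subr_ge0.
split => /=.
- move=> j; rewrite (bigD1 i) //= mxE eqxx.
  under eq_bigr => k /negPf ki do rewrite mxE ki mul0r addr0.
  rewrite -mulr_sumr; have := Hs j; rewrite (bigD1 i) //= => Hsj.
  have -> : \sum_(k < n | k != i) a k j = 1 - a i j by rewrite -Hsj; ring.
  ring.
- move=> k; rewrite subr_ge0 -/(load _ d k) load_shift_to.
  case: (eqVneq k i) => [->|_]; first by rewrite mul1r le_max lexx orbT.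
  rewrite mul0r mul0r addr0 le_max ler_wpM2l //.
  exact: lp_feasible_load_le F.
- by move=> k j; rewrite mxE addr_ge0 ?mulr_ge0 ?ler0n //; case: F.
Qed.

Lemma lp_optimal_le_load d sol i :
  nonneg_mx d -> lp_optimal d sol -> sol.2 <= load sol.1 d i.
Proof.
case: sol => a mu d0 [F Hopt] /=; have [_ _ a0] := F.
set l := load a d i; set S := \sum_(j < m) d i j.
rewrite leNgt; apply/negP => ltlmu.
have l0 : 0 <= l by exact: load_ge0.
have S0 : 0 <= S by apply: sumr_ge0.
have mu0 : 0 < mu by apply: le_lt_trans ltlmu.
have Smu0 : 0 < S + mu by apply: ltr_wpDl.
(* e is chosen so that the shifted load (1 - e) l + e S of machine i stays below mu *)
set e := (mu - l) / (S + mu).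
have e0 : 0 < e by apply: divr_gt0; rewrite // subr_gt0.
have e1 : e <= 1 by rewrite ler_pdivrMr // mul1r; lra.
have eS : e * (S - l) < mu - l.
  by rewrite /e mulrAC ltr_pdivrMr // ltr_pM2l ?subr_gt0 //; lra.
have e01 : 0 <= e <= 1 by rewrite (ltW e0) e1.
have /= := Hopt _ (@lp_feasible_shift_to d a mu i e e01 F).
rewrite le_max => /orP[]; rewrite -subr_ge0.
  have -> : (1 - e) * mu - mu = - (e * mu) by ring.
  by rewrite oppr_ge0 leNgt mulr_gt0.
have -> : (1 - e) * l + e * S - mu = e * (S - l) - (mu - l) by ring.
by rewrite subr_ge0 leNgt eS.
Qed.

Lemma lp_feasible_replace_row x d sol i :
  lp_feasible d sol ->
  lp_feasible (replace_row i x d) (sol.1, Num.max sol.2 (load sol.1 x i)).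
Proof.
case: sol => a mu F; have [Hs _ Hp] := F; split => //= k.
rewrite subr_ge0 -/(load _ _ k).
case: (eqVneq k i) => [->|ki].
  have -> : load a (replace_row i x d) i = load a x i.
    by apply: eq_bigr => j _; rewrite mxE eqxx.
  by rewrite le_max lexx orbT.
have -> : load a (replace_row i x d) k = load a d k.
  by apply: eq_bigr => j _; rewrite mxE (negPf ki).
by rewrite le_max; apply/orP; left; exact: lp_feasible_load_le k F.
Qed.

End LPLoads.

Theorem theorem4 (R : realFieldType) (n m : nat)
    (mech : 'M[R]_(n, m) -> 'M[R]_(n, m) * R) :
  LP_mechanism mech ->
  forall (t th : 'M[R]_(n, m)) (i : 'I_n),
    nonneg_mx t -> nonneg_mx th ->
    cost mech t i (replace_row i t th) <= cost mech t i th.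
Proof.
move=> Hm t th i t0 th0.
set d := replace_row i t th.
have d0 : nonneg_mx d by move=> k j; rewrite mxE; case: ifP.
have [Fd opt_d] := Hm _ d0.
have opt_th := Hm _ th0; have [Fth _] := opt_th.
have cost_ge_load (x : 'M[R]_(n, m)) : (forall j, x i j <= Num.max (th i j) (t i j)) ->
    load (mech th).1 x i <= cost mech t i th.
  by move=> hx; apply: ler_sum => j _; apply: ler_wpM2l => //; case: Fth.
have -> : cost mech t i d = load (mech d).1 d i.
  by apply: eq_bigr => j _; rewrite /d !mxE eqxx maxxx.
apply: le_trans (lp_feasible_load_le i Fd) _.
apply: le_trans (opt_d _ (lp_feasible_replace_row t i Fth)) _.
rewrite ge_max; apply/andP; split.
  apply: le_trans (lp_optimal_le_load i th0 opt_th) _.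
  by apply: cost_ge_load => j; rewrite le_max lexx.
by apply: cost_ge_load => j; rewrite le_max lexx orbT.
Qed.
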